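(* Let $K\subseteq L$ be convex bodies in $\mathbb{R}^d$ with the origin in the interior of $K$, and let $F$ be a non-trivial linear subspace of $\mathbb{R}^d$. Assume there are contact pairs $(v_1,p_1),\dots,(v_m,p_m)$ of $K$ and $L$ and positive weights $\alpha_1,\dots,\alpha_m$ such that \[ P_F\Big(\sum_{i}\alpha_i p_i\otimes v_i\Big)P_F=P_F,\quad \sum_i\alpha_ip_i=0,\quad \operatorname{tr}\Big(\sum_i\alpha_ip_i\otimes v_i\Big)=\sum_i\alpha_i=d,\quad \sum_i\alpha_iP_Fv_i=0. \] Let $K_{\mathrm{in}}=\operatorname{conv}\{v_1,\dots,v_m\}$ and $L_{\mathrm{out}}=\bigcap_{i=1}^m\{x\in\mathbb{R}^d:\langle p_i,x\rangle\le1\}$. Then \[ L_{\mathrm{out}}\cap F\subset -d\cdot P_FK_{\mathrm{in}}. \]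
   Context: A convex body is a compact convex set with nonempty interior. $P_F$ is orthogonal projection onto $F$. The polar of $S$ is $S^\circ=\{p:\langle x,p\rangle\le1\ \forall x\in S\}$. For convex bodies $K\subseteq L$, a contact pair of $K$ and $L$ is a pair $(v,p)$ with $v\in\partial K\cap\partial L$, $p\in\partial K^\circ\cap\partial L^\circ$, $\langle p,v\rangle=1$. For vectors $p,v$, $p\otimes v$ is the operator $x\mapsto\langle v,x\rangle p$. *)

From HB Require Import structures.
From mathcomp Require Import all_boot all_order all_algebra.
From mathcomp Require Import all_classical all_reals all_analysis.
Set Implicit Arguments. Unset Strict Implicit. Unset Printing Implicit Defensive.
Import Order.TTheory GRing.Theory Num.Theory.
Import numFieldTopology.Exports numFieldNormedType.Exports.
Local Open Scope classical_set_scope.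
Local Open Scope ring_scope.

Section Defs.
Variables (R : realType) (d : nat).
Notation V := 'rV[R]_d.

Definition dotv (x y : V) : R := \sum_(j < d) x 0 j * y 0 j.

Definition is_convex (A : set V) : Prop :=
  forall x y t, A x -> A y -> 0 <= t <= 1 -> A (t *: x + (1 - t) *: y).

Definition convex_body (A : set V) : Prop :=
  compact A /\ is_convex A /\ (interior A !=set0).

Definition boundary (A : set V) : set V := closure A `\` interior A.

Definition polar (S : set V) : set V := [set p | forall x, S x -> dotv x p <= 1].

Definition contact_pair (K L : set V) (v p : V) : Prop :=
  boundary K v /\ boundary L v /\ boundary (polar K) p /\ boundary (polar L) p
  /\ dotv p v = 1.

(* P is the matrix (acting on row vectors: x |-> x *m P) of the orthogonal
   projection onto the row space of F *)
Definition is_orthoproj (F P : 'M[R]_d) : Prop :=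
  forall x : V, (x *m P <= F)%MS /\
    (forall y : V, (y <= F)%MS -> dotv (x - x *m P) y = 0).

(* p (x) v : x |-> <v,x> p, as a matrix acting on row vectors: v^T *m p *)
Definition tensor (p v : V) : 'M[R]_d := v^T *m p.

Definition conv_hull m (v : 'I_m -> V) : set V :=
  [set x | exists lam : 'I_m -> R, (forall i, 0 <= lam i) /\
     \sum_(i < m) lam i = 1 /\ x = \sum_(i < m) lam i *: v i].

End Defs.

(* For x in F with <p_i, x> <= 1, the weights lam_i = alpha_i (1 - <p_i, x>) / d
   are nonnegative and sum to 1, because sum alpha_i p_i = 0 and
   sum alpha_i = d; so y = sum lam_i v_i lies in K_in.  As P is self-adjoint,
   P M P = P for M = sum alpha_i p_i (x) v_i yields the reconstruction
   x = sum alpha_i <p_i, x> P v_i on F, and with sum alpha_i P v_i = 0 this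
   gives P y = - x / d. *)

From HB Require Import structures.
From mathcomp Require Import all_boot all_order all_algebra.
From mathcomp Require Import all_classical all_reals all_analysis.
From mathcomp Require Import ring.
Set Implicit Arguments. Unset Strict Implicit. Unset Printing Implicit Defensive.

Import Order.TTheory GRing.Theory Num.Theory.
Import numFieldTopology.Exports numFieldNormedType.Exports.
Local Open Scope classical_set_scope.
Local Open Scope ring_scope.

Lemma trmx_sandwich_fixed (R : comNzRingType) n (P M : 'M[R]_n) (x : 'rV[R]_n) :
  P^T = P -> P *m M *m P = P -> x *m P = x -> x *m M^T *m P = x.
Proof.
move=> Psym PMP xP.
have PMtP : P *m (M^T *m P) = P.
  by have := congr1 trmx PMP; rewrite !trmx_mul Psym.
by rewrite -{1}xP -2!mulmxA PMtP xP.
Qed.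

Section Euclidean.
Variables (R : realType) (d : nat).
Notation V := 'rV[R]_d.

Lemma dotvE (x y : V) : dotv x y = (x *m y^T) 0 0.
Proof. by rewrite /dotv !mxE; apply: eq_bigr => j _; rewrite mxE. Qed.

Lemma dotvC (x y : V) : dotv x y = dotv y x.
Proof. by rewrite /dotv; apply: eq_bigr => j _; rewrite mulrC. Qed.

Lemma dotvBl (x y z : V) : dotv (x - y) z = dotv x z - dotv y z.
Proof. by rewrite !dotvE mulmxBl !mxE. Qed.

Lemma dotv0l (x : V) : dotv 0 x = 0.
Proof. by rewrite dotvE mul0mx mxE. Qed.

Lemma dotv_suml m (a : 'I_m -> R) (u : 'I_m -> V) (y : V) :
  dotv (\sum_(i < m) a i *: u i) y = \sum_(i < m) a i * dotv (u i) y.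
Proof.
rewrite dotvE mulmx_suml summxE; apply: eq_bigr => i _.
by rewrite -scalemxAl mxE dotvE.
Qed.

Lemma dotv_trmx (x y : V) (A : 'M[R]_d) : dotv (x *m A^T) y = dotv x (y *m A).
Proof. by rewrite !dotvE trmx_mul mulmxA. Qed.

Lemma dotvv_eq0 (x : V) : dotv x x = 0 -> x = 0.
Proof.
have sq_ge0 (j : 'I_d) : true -> 0 <= x 0 j * x 0 j.
  by rewrite -expr2 sqr_ge0.
rewrite /dotv => /(psumr_eq0P sq_ge0) xx0; apply/rowP => j; rewrite mxE.
by have /eqP := xx0 j isT; rewrite mulf_eq0 orbb => /eqP.
Qed.

Lemma eq_from_dotv (x y : V) : (forall z, dotv x z = dotv y z) -> x = y.
Proof.
move=> xy; apply/eqP; rewrite -subr_eq0; apply/eqP/dotvv_eq0.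
by rewrite dotvBl xy subrr.
Qed.

Lemma mul_trmx_tensor (x p v : V) : x *m (tensor p v)^T = dotv p x *: v.
Proof.
rewrite /tensor trmx_mul trmxK mulmxA [x *m p^T]mx11_scalar mul_scalar_mx.
by rewrite -dotvE dotvC.
Qed.

Lemma conv_hull_slack_combination m (v p : 'I_m -> V) (alpha : 'I_m -> R) (c : R)
    (x : V) :
  0 < c -> (forall i, 0 <= alpha i) ->
  \sum_(i < m) alpha i *: p i = 0 -> \sum_(i < m) alpha i = c ->
  (forall i, dotv (p i) x <= 1) ->
  conv_hull v (\sum_(i < m) (alpha i * (1 - dotv (p i) x) / c) *: v i).
Proof.
move=> c_gt0 alpha_ge0 sum_p sum_alpha px_le1.
exists (fun i => alpha i * (1 - dotv (p i) x) / c); split; [|split] => //.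
- by move=> i; rewrite divr_ge0 ?mulr_ge0 ?subr_ge0 ?alpha_ge0 ?px_le1 ?ltW.
- rewrite -mulr_suml; under eq_bigr do rewrite mulrBr mulr1.
  by rewrite sumrB sum_alpha -dotv_suml sum_p dotv0l subr0 divff ?gt_eqF.
Qed.

End Euclidean.

Section OrthogonalProjection.
Variables (R : realType) (d : nat) (F P : 'M[R]_d).
Hypothesis orthoP : is_orthoproj F P.
Notation V := 'rV[R]_d.

Lemma orthoproj_sub (u : V) : (u *m P <= F)%MS.
Proof. by have [] := orthoP u. Qed.

Lemma orthoproj_dot (u y : V) : (y <= F)%MS -> dotv (u *m P) y = dotv u y.
Proof.
have [_ perp] := orthoP u => /perp /eqP; rewrite dotvBl subr_eq0.
by move=> /eqP.
Qed.

Lemma orthoproj_id (y : V) : (y <= F)%MS -> y *m P = y.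
Proof.
move=> yF; have [_ perp] := orthoP y.
have yyPF : (y - y *m P <= F)%MS.
  by rewrite addmx_sub // -scaleN1r scalemx_sub // orthoproj_sub.
by apply/eqP; rewrite eq_sym -subr_eq0; apply/eqP/dotvv_eq0/perp.
Qed.

Lemma orthoproj_adjoint (u w : V) : dotv (u *m P) w = dotv u (w *m P).
Proof.
by rewrite dotvC -orthoproj_dot ?orthoproj_sub // dotvC orthoproj_dot
  ?orthoproj_sub.
Qed.

Lemma orthoproj_sym : P^T = P.
Proof.
apply/row_matrixP => i; rewrite !rowE; apply: eq_from_dotv => z.
by rewrite dotv_trmx orthoproj_adjoint.
Qed.

Lemma tensor_frame_decomposition m (v p : 'I_m -> V) (alpha : 'I_m -> R) (x : V) :
  P *m (\sum_(i < m) alpha i *: tensor (p i) (v i)) *m P = P -> (x <= F)%MS ->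
  \sum_(i < m) (alpha i * dotv (p i) x) *: (v i *m P) = x.
Proof.
move=> PMP xF.
rewrite -[RHS](trmx_sandwich_fixed orthoproj_sym PMP (orthoproj_id xF)).
rewrite linear_sum mulmx_sumr mulmx_suml; apply: eq_bigr => i _.
by rewrite linearZ -scalemxAr mul_trmx_tensor -!scalemxAl scalerA.
Qed.

Lemma outer_cap_sub_proj_hull m (v p : 'I_m -> V) (alpha : 'I_m -> R) (c : R) :
  0 < c -> (forall i, 0 <= alpha i) ->
  P *m (\sum_(i < m) alpha i *: tensor (p i) (v i)) *m P = P ->
  \sum_(i < m) alpha i *: p i = 0 -> \sum_(i < m) alpha i = c ->
  \sum_(i < m) alpha i *: (v i *m P) = 0 ->
  forall x : V, (forall i, dotv (p i) x <= 1) -> (x <= F)%MS ->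
  exists2 y, conv_hull v y & x = - c *: (y *m P).
Proof.
move=> c_gt0 alpha_ge0 PMP sum_p sum_alpha sum_vP x px_le1 xF.
eexists.
  exact: conv_hull_slack_combination c_gt0 alpha_ge0 sum_p sum_alpha px_le1.
rewrite -{1}(tensor_frame_decomposition PMP xF) -[LHS]subr0 -{2}sum_vP -sumrB.
rewrite mulmx_suml scaler_sumr; apply: eq_bigr => i _.
rewrite -scalemxAl scalerA -scalerBl; congr (_ *: _).
by field; rewrite gt_eqF.
Qed.

End OrthogonalProjection.

Theorem mainTheorem10 (R : realType) (d : nat) (K L : set 'rV[R]_d)
  (F P : 'M[R]_d) (m : nat) (v p : 'I_m -> 'rV[R]_d) (alpha : 'I_m -> R) :
  convex_body K -> convex_body L -> K `<=` L -> interior K 0 ->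
  (F != 0)%MS -> is_orthoproj F P ->
  (forall i, contact_pair K L (v i) (p i)) ->
  (forall i, 0 < alpha i) ->
  P *m (\sum_(i < m) alpha i *: tensor (p i) (v i)) *m P = P ->
  \sum_(i < m) alpha i *: p i = 0 ->
  \tr (\sum_(i < m) alpha i *: tensor (p i) (v i)) = d%:R ->
  \sum_(i < m) alpha i = d%:R ->
  \sum_(i < m) alpha i *: (v i *m P) = 0 ->
  forall x : 'rV[R]_d,
    (forall i, dotv (p i) x <= 1) -> (x <= F)%MS ->
    exists2 y, conv_hull v y & x = - (d%:R) *: (y *m P).
Proof.
move=> _ _ _ _ F_neq0 orthoP _ alpha_gt0 PMP sum_p _ sum_alpha sum_vP.
have d_gt0 : (0 < d)%N.
  by apply: leq_trans (rank_leq_col F); rewrite lt0n mxrank_eq0.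
apply: (outer_cap_sub_proj_hull orthoP _ _ PMP sum_p sum_alpha sum_vP).
  by rewrite ltr0n.
by move=> i; apply: ltW.
Qed.
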